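(* Let $A_\star,\hat A\in\mathbb{R}^{n\times n}$, $B_\star,\hat B\in\mathbb{R}^{n\times m}$. For any $P_1,P_2\in\mathbb{S}^n_+$ and any integer $i\ge0$, define $\hat P_{(i)}=\mathcal{R}^{(i)}_{\hat A,\hat B}(P_1)$ and $P_{(i)}=\mathcal{R}^{(i)}_{A_\star,B_\star}(P_2)$. Then $$\hat P_{(i)}-P_{(i)}=\big[\Phi^{(0:i)}_{\hat A,\hat B}(P_1)\big]^\top(P_1-P_2)\,\bar\Phi^{(0:i)}(P_2)+\sum_{j=1}^{i}\big[\Phi^{(i-j+1:i)}_{\hat A,\hat B}(P_1)\big]^\top\mathcal{M}\big(\hat P_{(i-j)},P_{(i-j)}\big)\,\bar\Phi^{(i-j+1:i)}(P_2),$$ where for $P_1,P_2\in\mathbb{S}^n_+$, $$\mathcal{M}(P_1,P_2)=\hat A^\top P_2(I+S_{B_\star}P_2)^{-1}\hat A-A_\star^\top P_2(I+S_{B_\star}P_2)^{-1}A_\star+\hat A^\top(I+P_1S_{\hat B})^{-1}P_2(S_{B_\star}-S_{\hat B})P_2(I+S_{B_\star}P_2)^{-1}\hat A.$$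
   Context: $R\in\mathbb{S}^m_{++}$, $Q\in\mathbb{S}^n_+$. $S_B=BR^{-1}B^\top$. Riccati map $\mathcal{R}_{A,B}(P)=A^\top P(I+S_BP)^{-1}A+Q$ on $\mathbb{S}^n_+$, iterates $\mathcal{R}^{(0)}_{A,B}=\mathrm{id}$, $\mathcal{R}^{(i+1)}_{A,B}=\mathcal{R}_{A,B}\circ\mathcal{R}^{(i)}_{A,B}$. $\mathcal{K}_{A,B}(F)=(R+B^\top FB)^{-1}B^\top FA$ and $\mathcal{L}_{A,B}(P)=(I+S_BP)^{-1}A=A-B\mathcal{K}_{A,B}(P)$. For integers $0\le j\le i$: $\Phi^{(j:i)}_{A,B}(P)=\mathcal{L}_{A,B}(\mathcal{R}^{(j)}_{A,B}(P))\cdots\mathcal{L}_{A,B}(\mathcal{R}^{(i-1)}_{A,B}(P))$ if $i>j$, and $=I$ if $i=j$. Define $\mathcal{W}(P)=I+(S_{B_\star}-S_{\hat B})P$, $\mathcal{H}(P)=(I+S_{B_\star}P)^{-1}(\hat A-A_\star)$, $\bar{\mathcal{L}}(P)=\mathcal{W}(P)[\mathcal{H}(P)+\mathcal{L}_{A_\star,B_\star}(P)]$, and $\bar\Phi^{(j:i)}(P)=\bar{\mathcal{L}}(\mathcal{R}^{(j)}_{A_\star,B_\star}(P))\cdots\bar{\mathcal{L}}(\mathcal{R}^{(i-1)}_{A_\star,B_\star}(P))$ if $i>j$, and $=I$ if $i=j$. *)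

From HB Require Import structures.
From mathcomp Require Import all_boot all_order all_algebra.
Set Implicit Arguments. Unset Strict Implicit. Unset Printing Implicit Defensive.
Import Order.TTheory GRing.Theory Num.Theory.
Local Open Scope ring_scope.

Section Riccati.
Variables (R : realFieldType) (n m : nat).

Definition psd (P : 'M[R]_n) : Prop :=
  P^T = P /\ forall x : 'cV[R]_n, 0 <= (x^T *m P *m x) 0 0.
Definition pdm (P : 'M[R]_m) : Prop :=
  P^T = P /\ forall x : 'cV[R]_m, x != 0 -> 0 < (x^T *m P *m x) 0 0.

Variables (Q : 'M[R]_n) (Rm : 'M[R]_m).

Definition SB (B : 'M[R]_(n, m)) : 'M[R]_n := B *m invmx Rm *m B^T.

Definition ric (A : 'M[R]_n) (B : 'M[R]_(n, m)) (P : 'M[R]_n) : 'M[R]_n :=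
  A^T *m P *m invmx (1%:M + SB B *m P) *m A + Q.

Definition ric_iter (A : 'M[R]_n) (B : 'M[R]_(n, m)) (i : nat) (P : 'M[R]_n) :=
  iter i (ric A B) P.

Definition Kgain (A : 'M[R]_n) (B : 'M[R]_(n, m)) (F : 'M[R]_n) : 'M[R]_(m, n) :=
  invmx (Rm + B^T *m F *m B) *m B^T *m F *m A.

Definition Lcl (A : 'M[R]_n) (B : 'M[R]_(n, m)) (P : 'M[R]_n) : 'M[R]_n :=
  invmx (1%:M + SB B *m P) *m A.

Definition Phi (A : 'M[R]_n) (B : 'M[R]_(n, m)) (j i : nat) (P : 'M[R]_n) : 'M[R]_n :=
  foldr (fun k acc => Lcl A B (ric_iter A B k P) *m acc) 1%:M (iota j (i - j)).

Variables (As Ah : 'M[R]_n) (Bs Bh : 'M[R]_(n, m)).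

Definition Wm (P : 'M[R]_n) : 'M[R]_n := 1%:M + (SB Bs - SB Bh) *m P.
Definition Hm (P : 'M[R]_n) : 'M[R]_n := invmx (1%:M + SB Bs *m P) *m (Ah - As).
Definition Lbar (P : 'M[R]_n) : 'M[R]_n := Wm P *m (Hm P + Lcl As Bs P).

Definition Phibar (j i : nat) (P : 'M[R]_n) : 'M[R]_n :=
  foldr (fun k acc => Lbar (ric_iter As Bs k P) *m acc) 1%:M (iota j (i - j)).

Definition Mm (P1 P2 : 'M[R]_n) : 'M[R]_n :=
  Ah^T *m P2 *m invmx (1%:M + SB Bs *m P2) *m Ah
  - As^T *m P2 *m invmx (1%:M + SB Bs *m P2) *m As
  + Ah^T *m invmx (1%:M + P1 *m SB Bh) *m P2 *m (SB Bs - SB Bh) *m P2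
      *m invmx (1%:M + SB Bs *m P2) *m Ah.

End Riccati.

From HB Require Import structures.
From mathcomp Require Import all_boot all_order all_algebra.
From mathcomp Require Import ring lra zify.
Import Order.TTheory GRing.Theory Num.Theory.
Set Implicit Arguments. Unset Strict Implicit. Unset Printing Implicit Defensive.
Local Open Scope ring_scope.

(* A single Riccati step obeys the two-sided recursion
     R_hat(P1) - R_star(P2) = L(P1)^T (P1 - P2) Lbar(P2) + M(P1, P2),
   and unrolling it gives the formula.  For the step, push P1 through the inverse,
   P1 (I + S_hat P1)^-1 = (I + P1 S_hat)^-1 P1, and multiply the polynomial identity
     P1 (I + S P2) = (P1 - P2)(I + (S - S_hat) P2) + (I + P1 S_hat) P2 + P2 (S - S_hat) P2
   by (I + P1 S_hat)^-1 on the left and (I + S P2)^-1 on the right.  Positive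
   semidefiniteness of Q, of the initial matrices and hence of all iterates is only
   used to make the matrices I + S P invertible. *)

Section PSD.
Variable R : realFieldType.

Section SquareMatrices.
Variable k : nat.
Implicit Types (A P S : 'M[R]_k) (x : 'cV[R]_k).

Lemma ker0_unitmx A : (forall x, A *m x = 0 -> x = 0) -> A \in unitmx.
Proof.
move=> ker0; rewrite unitmxE unitfE -det_tr; apply/negP => /det0P [v nz_v vA0].
have /ker0 /(congr1 trmx) : A *m v^T = 0 by rewrite -[A]trmxK -trmx_mul vA0 trmx0.
by rewrite trmxK trmx0 => v0; rewrite v0 eqxx in nz_v.
Qed.

Lemma trmx_mul_self_eq0 x : (x^T *m x) 0 0 = 0 -> x = 0.
Proof.
rewrite mxE => sum0; apply/matrixP => i j; rewrite (ord1 j) mxE.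
have sq_ge0 l : true -> 0 <= x^T 0 l * x l 0 by rewrite mxE -expr2 sqr_ge0.
have /eqP := psumr_eq0P sq_ge0 sum0 (i := i) isT.
by rewrite mxE mulf_eq0 orbb => /eqP.
Qed.

Lemma psd_form_eq0 P x : psd P -> (x^T *m P *m x) 0 0 = 0 -> P *m x = 0.
Proof.
move=> [sym_P ge0_P] form0; set y := P *m x.
set a := (y^T *m y) 0 0; set b := (y^T *m P *m y) 0 0.
(* [0 <= (x - t y)^T P (x - t y)] reads [0 <= t^2 b - 2 t a];
   the choice [t = a / (b + 1)] then forces [a = 0]. *)
have ge0_t t : 0 <= t ^+ 2 * b - t * a - t * a.
  have := ge0_P (x - t *: y).
  rewrite [(x - _)^T]raddfB /= linearZ /= !mulmxBl !mulmxBr -!scalemxAl -!scalemxAr.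
  have -> : y^T *m P *m x = y^T *m y by rewrite -mulmxA.
  have -> : x^T *m P *m y = y^T *m y by rewrite /y trmx_mul sym_P !mulmxA.
  rewrite [x^T *m _ *m _]mx11_scalar [y^T *m y]mx11_scalar.
  by rewrite [y^T *m _ *m _]mx11_scalar form0 -/a -/b !mxE /= !mulr1n; lra.
have b_ge0 : 0 <= b by apply: ge0_P.
have := ge0_t (a / (b + 1)); set u := a / (b + 1).
have a_u : a = u * (b + 1) by rewrite mulfVK // gt_eqF //; lra.
rewrite a_u => ge0_u.
have u0 : u = 0 by nra.
by apply: trmx_mul_self_eq0; rewrite -/a a_u u0 mul0r.
Qed.

Lemma trmx_add1_mul S P : S^T = S -> P^T = P -> (1%:M + S *m P)^T = 1%:M + P *m S.
Proof.
by move=> sym_S sym_P; rewrite [(1%:M + _)^T]raddfD /= trmx1 trmx_mul sym_S sym_P.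
Qed.

Lemma unitmx_add1_mul S P : psd S -> psd P -> 1%:M + S *m P \in unitmx.
Proof.
move=> [sym_S ge0_S] psdP; have [sym_P ge0_P] := psdP; apply: ker0_unitmx => x.
rewrite mulmxDl mul1mx => /eqP; rewrite addr_eq0 => /eqP x_eq; set u := P *m x.
(* [x = - S P x] turns the form of [P] at [x] into minus the form of [S] at [P x] *)
have form_eq : (x^T *m P *m x) 0 0 = - (u^T *m S *m u) 0 0.
  by rewrite {2}x_eq /u trmx_mul sym_P mulmxN -!mulmxA mxE !mulmxA.
have form0 : (x^T *m P *m x) 0 0 = 0.
  by apply/eqP; rewrite eq_le ge0_P andbT form_eq oppr_le0 ge0_S.
by rewrite x_eq -mulmxA (psd_form_eq0 psdP form0) mulmx0 oppr0.
Qed.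

Lemma unitmx_add1_mulC S P : psd S -> psd P -> 1%:M + P *m S \in unitmx.
Proof.
move=> psdS psdP; rewrite -trmx_add1_mul ?(proj1 psdS) ?(proj1 psdP) //.
by rewrite unitmx_tr unitmx_add1_mul.
Qed.

Lemma mulmx_invmx_add1_mul S P : 1%:M + S *m P \in unitmx ->
  1%:M + P *m S \in unitmx ->
  P *m invmx (1%:M + S *m P) = invmx (1%:M + P *m S) *m P.
Proof.
move=> unit_SP unit_PS; apply: (canRL (mulKmx unit_PS)); rewrite mulmxA.
have -> : (1%:M + P *m S) *m P = P *m (1%:M + S *m P).
  by rewrite mulmxDl mulmxDr mul1mx mulmx1 mulmxA.
by rewrite -mulmxA mulmxV // mulmx1.
Qed.

End SquareMatrices.

Lemma psd_add k (P P' : 'M[R]_k) : psd P -> psd P' -> psd (P + P').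
Proof.
move=> [sym_P ge0_P] [sym_P' ge0_P']; split; first by rewrite raddfD /= sym_P sym_P'.
by move=> x; rewrite mulmxDr mulmxDl mxE addr_ge0.
Qed.

Lemma psd_congr k l (P : 'M[R]_k) (C : 'M[R]_(k, l)) : psd P -> psd (C^T *m P *m C).
Proof.
move=> [sym_P ge0_P]; split; first by rewrite !trmx_mul trmxK sym_P mulmxA.
by move=> x; have := ge0_P (C *m x); rewrite trmx_mul !mulmxA.
Qed.

Lemma pdm_unitmx k (P : 'M[R]_k) : pdm P -> P \in unitmx.
Proof.
move=> [_ gt0_P]; apply: ker0_unitmx => x Px0; apply/eqP; apply: contraTT isT => nz_x.
by have := gt0_P x nz_x; rewrite -mulmxA Px0 mulmx0 mxE ltxx.
Qed.

Lemma psd_invmx k (P : 'M[R]_k) : pdm P -> psd (invmx P).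
Proof.
move=> pdP; have [sym_P gt0_P] := pdP; have unit_P := pdm_unitmx pdP.
split; first by rewrite trmx_inv sym_P.
move=> x; set w := invmx P *m x.
have -> : x^T *m invmx P *m x = w^T *m P *m w.
  by rewrite trmx_mul trmx_inv sym_P -!mulmxA (mulmxA P) mulmxV // mul1mx.
have [->|nz_w] := eqVneq w 0; first by rewrite mulmx0 mxE.
exact/ltW/gt0_P.
Qed.

Lemma psd_mul_invmx_add1_mul k (S P : 'M[R]_k) : psd S -> psd P ->
  psd (P *m invmx (1%:M + S *m P)).
Proof.
move=> psdS psdP; have [sym_S _] := psdS; have [sym_P ge0_P] := psdP.
have unit_SP := unitmx_add1_mul psdS psdP; have unit_PS := unitmx_add1_mulC psdS psdP.
split.
  by rewrite trmx_mul trmx_inv trmx_add1_mul // sym_P mulmx_invmx_add1_mul.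
move=> y; set z := invmx (1%:M + S *m P) *m y.
have -> : y = (1%:M + S *m P) *m z by rewrite mulKVmx.
(* with [y = (1 + S P) z] the form is [z^T P z + (P z)^T S (P z)] *)
rewrite -!mulmxA mulKmx // mulmxA trmx_mul trmx_add1_mul // mulmxDr mulmx1 !mulmxDl mxE.
apply: addr_ge0; first exact: ge0_P.
by have := proj2 (psd_congr P psdS) z; rewrite trmx_mul sym_P !mulmxA.
Qed.

End PSD.

Lemma invmx_add1_mul_split (R : realFieldType) n (P1 P2 S Sh : 'M[R]_n) :
  1%:M + P1 *m Sh \in unitmx -> 1%:M + S *m P2 \in unitmx ->
  invmx (1%:M + P1 *m Sh) *m P1 =
    invmx (1%:M + P1 *m Sh) *m (P1 - P2) *m (1%:M + (S - Sh) *m P2)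
      *m invmx (1%:M + S *m P2)
    + P2 *m invmx (1%:M + S *m P2)
    + invmx (1%:M + P1 *m Sh) *m P2 *m (S - Sh) *m P2 *m invmx (1%:M + S *m P2).
Proof.
set U := 1%:M + P1 *m Sh; set V := 1%:M + S *m P2 => unit_U unit_V.
(* after multiplying by [U] on the left and [V] on the right the identity is polynomial *)
have poly_id : P1 *m V =
    (P1 - P2) *m (1%:M + (S - Sh) *m P2) + U *m P2 + P2 *m (S - Sh) *m P2.
  rewrite /U /V.
  rewrite !(mulmxDr, mulmxDl, mulmxBr, mulmxBl, mulmxN, mulNmx, mulmx1, mul1mx, mulmxA).
  move: (P1 *m S *m P2) (P2 *m S *m P2) (P1 *m Sh *m P2) (P2 *m Sh *m P2) => a b c d.
  by apply/matrixP => i j; rewrite !mxE; ring.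
move: poly_id; set W := 1%:M + _ *m P2; set D := S - Sh.
clearbody U V W D => poly_id.
rewrite -[P1 in LHS](mulmxK unit_V) !mulmxA -(mulmxA (invmx U)) poly_id.
by rewrite !(mulmxDr, mulmxDl) !mulmxA mulVmx // mul1mx.
Qed.

Section RiccatiStep.
Variables (R : realFieldType) (n m : nat) (Q : 'M[R]_n) (Rm : 'M[R]_m).
Hypothesis pdRm : pdm Rm.

Lemma psd_SB (B : 'M[R]_(n, m)) : psd (SB Rm B).
Proof.
have -> : SB Rm B = B^T^T *m invmx Rm *m B^T by rewrite trmxK.
exact/psd_congr/psd_invmx.
Qed.

Section OneStep.
Variables (As Ah : 'M[R]_n) (Bs Bh : 'M[R]_(n, m)).

Lemma ric_sub_ric (P1 P2 : 'M[R]_n) : psd P1 -> psd P2 ->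
  ric Q Rm Ah Bh P1 - ric Q Rm As Bs P2 =
  (Lcl Rm Ah Bh P1)^T *m (P1 - P2) *m Lbar Rm As Ah Bs Bh P2
  + Mm Rm As Ah Bs Bh P1 P2.
Proof.
move=> psdP1 psdP2; have psdSh := psd_SB Bh; have psdS := psd_SB Bs.
have unit_ShP1 := unitmx_add1_mul psdSh psdP1.
have unit_P1Sh := unitmx_add1_mulC psdSh psdP1.
have unit_SP2 := unitmx_add1_mul psdS psdP2.
rewrite /Lcl /Lbar /Wm /Hm /ric /Mm -mulmxDr subrK trmx_mul trmx_inv.
rewrite trmx_add1_mul ?(proj1 psdSh) ?(proj1 psdP1) //.
rewrite -(mulmxA Ah^T P1) mulmx_invmx_add1_mul //.
rewrite (invmx_add1_mul_split unit_P1Sh unit_SP2).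
set D := SB Rm Bs - SB Rm Bh; clearbody D.
move: (invmx _) (invmx _) (P1 - P2) (1%:M + _ *m P2) => iV iU E W.
rewrite !mulmxDr !mulmxDl !mulmxA (addrC (_ *m As)) addrKA.
by rewrite !addrA addrAC.
Qed.

End OneStep.

Hypothesis psdQ : psd Q.

Lemma psd_ric (A : 'M[R]_n) (B : 'M[R]_(n, m)) (P : 'M[R]_n) :
  psd P -> psd (ric Q Rm A B P).
Proof.
move=> psdP; rewrite /ric -(mulmxA A^T P); apply: (psd_add _ psdQ).
apply: psd_congr; exact: psd_mul_invmx_add1_mul (psd_SB B) psdP.
Qed.

Lemma psd_ric_iter (A : 'M[R]_n) (B : 'M[R]_(n, m)) k (P : 'M[R]_n) :
  psd P -> psd (ric_iter Q Rm A B k P).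
Proof. by move=> psdP; elim: k => //= k; apply: psd_ric. Qed.

End RiccatiStep.

Section OrderedProduct.
Variables (R : realFieldType) (n : nat).
Implicit Types (F : nat -> 'M[R]_n).

(* [ordprod F j i = F j *m ... *m F i.-1]; [Phi] and [Phibar] are instances of it. *)
Definition ordprod F (j i : nat) : 'M[R]_n :=
  foldr (fun k acc => F k *m acc) 1%:M (iota j (i - j)).

Lemma ordprod_id F i : ordprod F i i = 1%:M.
Proof. by rewrite /ordprod subnn. Qed.

Lemma ordprod_recr F j i : (j <= i)%N -> ordprod F j i.+1 = ordprod F j i *m F i.
Proof.
move=> le_ji; rewrite /ordprod subSn // -addn1 iotaD foldr_cat subnKC //= mulmx1.
by elim: (iota j (i - j)) => [|k s IHs] /=; rewrite ?mul1mx // -mulmxA IHs.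
Qed.

Lemma sandwich_recursion_closed_form (D L Lb M : nat -> 'M[R]_n) :
  (forall k, D k.+1 = (L k)^T *m D k *m Lb k + M k) ->
  forall i, D i =
    (ordprod L 0 i)^T *m D 0 *m ordprod Lb 0 i
    + \sum_(1 <= j < i.+1)
        (ordprod L (i - j).+1 i)^T *m M (i - j)%N *m ordprod Lb (i - j).+1 i.
Proof.
move=> D_rec; elim=> [|i IHi].
  by rewrite big_geq // !ordprod_id trmx1 mul1mx mulmx1 addr0.
rewrite D_rec IHi [in RHS]big_nat_recl // subSS subn0 !ordprod_id trmx1 mul1mx mulmx1.
have shift_sum :
    \sum_(1 <= j < i.+1) (ordprod L (i - j).+1 i.+1)^T *m M (i - j)%N
                           *m ordprod Lb (i - j).+1 i.+1
    = (L i)^T *m (\sum_(1 <= j < i.+1) (ordprod L (i - j).+1 i)^T *m M (i - j)%N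
                                       *m ordprod Lb (i - j).+1 i) *m Lb i.
  rewrite mulmx_sumr mulmx_suml; apply: eq_big_nat => j /andP [j_gt0 j_le_i].
  by rewrite !ordprod_recr ?trmx_mul ?mulmxA //; lia.
under eq_big_nat => j _ do rewrite subSS.
rewrite shift_sum !ordprod_recr // trmx_mul mulmxDr mulmxDl !mulmxA.
by rewrite addrCA addrC.
Qed.

End OrderedProduct.

Theorem lemma3 (R : realFieldType) (n m : nat) (Q : 'M[R]_n) (Rm : 'M[R]_m)
  (As Ah : 'M[R]_n) (Bs Bh : 'M[R]_(n, m)) (P1 P2 : 'M[R]_n) (i : nat) :
  psd Q -> pdm Rm -> psd P1 -> psd P2 ->
  ric_iter Q Rm Ah Bh i P1 - ric_iter Q Rm As Bs i P2 =
    (Phi Q Rm Ah Bh 0 i P1)^T *m (P1 - P2) *m Phibar Q Rm As Ah Bs Bh 0 i P2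
    + \sum_(1 <= j < i.+1)
        (Phi Q Rm Ah Bh (i - j).+1 i P1)^T
        *m Mm Rm As Ah Bs Bh (ric_iter Q Rm Ah Bh (i - j) P1)
                             (ric_iter Q Rm As Bs (i - j) P2)
        *m Phibar Q Rm As Ah Bs Bh (i - j).+1 i P2.
Proof.
move=> psdQ pdRm psdP1 psdP2.
pose Phat k := ric_iter Q Rm Ah Bh k P1; pose Pstar k := ric_iter Q Rm As Bs k P2.
have psd_Phat k : psd (Phat k) := psd_ric_iter pdRm psdQ Ah Bh k psdP1.
have psd_Pstar k : psd (Pstar k) := psd_ric_iter pdRm psdQ As Bs k psdP2.
apply: (sandwich_recursion_closed_form (D := fun k => Phat k - Pstar k)
  (L := fun k => Lcl Rm Ah Bh (Phat k)) (Lb := fun k => Lbar Rm As Ah Bs Bh (Pstar k))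
  (M := fun k => Mm Rm As Ah Bs Bh (Phat k) (Pstar k))) => k.
exact (ric_sub_ric Q pdRm As Ah Bs Bh (psd_Phat k) (psd_Pstar k)).
Qed.
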